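(* Let $G=(V,E)$ be a computation graph with vertices $v_1,\dots,v_n$, let $M$ be the fast-memory size, and let $J^*_G$ be the minimum number of non-trivial I/Os over all valid evaluations of $G$. Let $\tilde L$ and $W^{(k)}$ be as defined in the context. Then $J^*_G$ is at least the optimal value of $$\min_{X\in\mathcal{O}_G}\ \max_{1\le k\le n}\ \left(\operatorname{tr}\!\left(X^T\tilde L X W^{(k)}\right) - 2kM\right).$$
   Context: A computation graph is a finite directed acyclic graph $G=(V,E)$. Each vertex is an operation producing a single element, and an edge $(u,v)$ means the result of $u$ is an operand of $v$. Sources are the inputs and sinks are the outputs. Execution model: a single processor has a fast memory holding at most $M$ elements and an unbounded slow memory. Every vertex is evaluated exactly once (no recomputation), in an order that is topological with respect to $G$. To evaluate $v$, all parents of $v$ must be in fast memory; a parent not present must be read from slow memory. The eviction policy is unconstrained, but a value that is evicted while still needed by a later vertex must first be written to slow memory. Only non-trivial I/O is counted. Inputs can be placed directly into fast memory at no cost, and outputs are reported immediately at no cost when computed. However, an input that is evicted while still needed must be written to slow memory. Each transfer of one element between fast and slow memory counts as one I/O. An evaluation order is encoded as an $n\times n$ permutation matrix $X$ with $X_{ij}=1$ iff vertex $v_i$ is evaluated at time step $j$. $\mathcal{O}_G$ is the set of such matrices corresponding to topological orders of $G$. $\tilde G$ is the weighted undirected graph on $V$ containing, for each directed edge $(u,v)\in E$, the undirected edge $\{u,v\}$ with weight $1/d_{out}(u)$, where $d_{out}$ is out-degree in $G$. $\tilde L=\tilde D-\tilde A$ is its Laplacian, with $\tilde A$ the weighted adjacency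 matrix and $\tilde D$ the diagonal weighted-degree matrix. For $1\le k\le n$, split the time steps $1,\dots,n$ into $k$ consecutive blocks: the first $n \bmod k$ blocks have $\lfloor n/k\rfloor+1$ elements and the remaining blocks have $\lfloor n/k\rfloor$ elements. Let $\hat W^{(k)}\in\{0,1\}^{n\times k}$ have $(\hat W^{(k)})_{tj}=1$ iff time step $t$ lies in block $j$, and set $W^{(k)}=\hat W^{(k)}(\hat W^{(k)})^T$. *)

From HB Require Import structures.
From mathcomp Require Import all_boot all_order all_algebra.
From mathcomp Require Import fingroup perm.
Set Implicit Arguments. Unset Strict Implicit. Unset Printing Implicit Defensive.
Import Order.TTheory GRing.Theory Num.Theory.
Local Open Scope ring_scope.

(* A computation graph on vertices v_1..v_n, represented by 'I_n;
   E u v means (u,v) is a directed edge (result of u is an operand of v). *)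
Definition acyclic n (E : rel 'I_n) : Prop :=
  forall u v, E u v -> ~~ connect E v u.

Definition dout n (E : rel 'I_n) (u : 'I_n) : nat := #|[set v | E u v]|.

(* Operations of a single processor with fast memory F, slow memory S;
   D = set of already evaluated vertices. *)
Inductive op (n : nat) :=
| Compute of 'I_n   (* evaluate a vertex (for a source: place the input, free) *)
| Read of 'I_n
| Write of 'I_n
| Evict of 'I_n.

(* Evicting a value not stored in slow memory loses it (it can never be read
   back, and there is no recomputation). *)
Fixpoint exec n (E : rel 'I_n) (M : nat) (F S D : {set 'I_n}) (s : seq (op n))
  : bool :=
  match s with
  | [::] => D == setT
  | Compute v :: s' =>
      [&& v \notin D, [forall u, E u v ==> (u \in F)], (#|v |: F| <= M)%N
        & exec E M (v |: F) S (v |: D) s']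
  | Read v :: s' =>
      [&& v \in S, (#|v |: F| <= M)%N & exec E M (v |: F) S D s']
  | Write v :: s' => (v \in F) && exec E M F (v |: S) D s'
  | Evict v :: s' => exec E M (F :\ v) S D s'
  end.

Definition valid_eval n (E : rel 'I_n) (M : nat) (s : seq (op n)) : bool :=
  exec E M set0 set0 set0 s.

Definition is_io n (o : op n) : bool :=
  match o with Read _ | Write _ => true | _ => false end.

Definition io_cost n (s : seq (op n)) : nat := count (@is_io n) s.

(* s v = time step (0-based) at which vertex v is evaluated *)
Definition topological n (E : rel 'I_n) (s : 'S_n) : Prop :=
  forall u v, E u v -> (s u < s v)%N.

Definition order_mx (R : nzRingType) n (s : 'S_n) : 'M[R]_n :=
  \matrix_(i, j) (s i == j)%:R.

Definition in_OG (R : nzRingType) n (E : rel 'I_n) (X : 'M[R]_n) : Prop :=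
  exists s : 'S_n, topological E s /\ X = order_mx R s.

Definition wadj (R : fieldType) n (E : rel 'I_n) (i j : 'I_n) : R :=
  (E i j)%:R / (dout E i)%:R + (E j i)%:R / (dout E j)%:R.

Definition Atilde (R : fieldType) n (E : rel 'I_n) : 'M[R]_n :=
  \matrix_(i, j) wadj R E i j.

Definition Dtilde (R : fieldType) n (E : rel 'I_n) : 'M[R]_n :=
  diag_mx (\row_i \sum_(j < n) wadj R E i j).

Definition Ltilde (R : fieldType) n (E : rel 'I_n) : 'M[R]_n :=
  Dtilde R E - Atilde R E.

(* blocks j = 0..k-1 (0-based); the first n mod k have size n/k + 1 *)
Definition blk_size (n k j : nat) : nat := n %/ k + (j < n %% k).
Definition blk_start (n k j : nat) : nat := \sum_(i < j) blk_size n k i.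

(* time steps t = 0..n-1 (0-based) *)
Definition What (R : nzRingType) (n k : nat) : 'M[R]_(n, k) :=
  \matrix_(t, j) ((blk_start n k j <= t) && (t < blk_start n k j + blk_size n k j))%N%:R.

Definition Wk (R : nzRingType) (n k : nat) : 'M[R]_n :=
  What R n k *m (What R n k)^T.

From HB Require Import structures.
From mathcomp Require Import all_boot all_order all_algebra.
From mathcomp Require Import fingroup perm.
From mathcomp Require Import zify.
Set Implicit Arguments. Unset Strict Implicit. Unset Printing Implicit Defensive.
Import Order.TTheory GRing.Theory Num.Theory.

(* Let σ be the order in which a valid evaluation computes the vertices and X
   its permutation matrix. The k blocks of W^(k) cut the time axis, and hence
   the operation sequence, into k segments. For the set A of vertices computed
   in one segment, the quadratic form of the indicator of A under L~ is the
   weight of the cut (A, ~A); since the weights 1/d_out(u) of the out-edges of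
   u sum to 1, this is at most the number of vertices of A with a successor
   outside A plus the number of vertices outside A with a successor in A.
   A vertex of the first kind is still needed after the segment, so at its end
   it is in fast memory or was written during it; a vertex of the second kind
   is needed during the segment, so at its start it is in fast memory or it is
   read during it. Each block thus contributes at most 2M plus the I/Os of its
   segment, and summing over the blocks bounds tr(X^T L~ X W^(k)) by the
   number of I/Os of the evaluation plus 2kM. *)

Definition slice T (i j : nat) (s : seq T) : seq T := take (j - i) (drop i s).

Lemma cat_take_slice T i j (s : seq T) : i <= j -> take i s ++ slice i j s = take j s.
Proof. by move=> le_ij; rewrite -takeD subnKC. Qed.

Lemma cat_take_slice_drop T i j (s : seq T) :
  i <= j -> take i s ++ slice i j s ++ drop j s = s.
Proof. by move=> le_ij; rewrite catA cat_take_slice // cat_take_drop. Qed.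

Lemma sum_count_slices T (a : pred T) (f : nat -> nat) K (s : seq T) :
  (forall j, f j <= f j.+1) ->
  \sum_(j < K) count a (slice (f j) (f j.+1) s) <= count a s.
Proof.
move=> f_mono.
have telescope K' : \sum_(j < K') count a (slice (f j) (f j.+1) s)
    + count a (take (f 0) s) = count a (take (f K') s).
  elim: K' => [|K' IH]; first by rewrite big_ord0.
  by rewrite big_ord_recr /= addnAC IH -count_cat cat_take_slice.
rewrite -(leq_add2r (count a (take (f 0) s))) telescope.
by rewrite -{2}(cat_take_drop (f K) s) count_cat -addnA leq_addr.
Qed.

Section PmapIndex.
Variables (T : Type) (U : eqType) (f : T -> option U).

(* The index in s of the element giving the m-th (0-based) entry of pmap f s,
   or size s if pmap f s has at most m entries. *)
Fixpoint pmap_index (m : nat) (s : seq T) : nat :=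
  if s is x :: s' then
    if f x is Some _ then (if m is m'.+1 then (pmap_index m' s').+1 else 0)
    else (pmap_index m s').+1
  else 0.

Lemma pmap_take_index m s : pmap f (take (pmap_index m s) s) = take m (pmap f s).
Proof.
elim: s m => [|x s IH] m //=.
case fx: (f x) => [?|]; last by rewrite /= fx IH.
by case: m => [|m] //=; rewrite fx IH.
Qed.

Lemma pmap_index_mono m1 m2 s : m1 <= m2 -> pmap_index m1 s <= pmap_index m2 s.
Proof.
elim: s m1 m2 => [|x s IH] m1 m2 //= le_m.
case: (f x) => [?|]; last by rewrite ltnS IH.
by case: m1 le_m => [|m1] //; case: m2 => [|m2] // le_m; rewrite ltnS IH.
Qed.

Lemma mem_pmap_slice_index m1 m2 s x :
  uniq (pmap f s) -> x \in pmap f s -> m1 <= m2 ->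
  (x \in pmap f (slice (pmap_index m1 s) (pmap_index m2 s) s))
    = (m1 <= index x (pmap f s) < m2).
Proof.
move=> uniq_s x_s le_m.
have := cat_take_slice s (pmap_index_mono s le_m).
move/(congr1 (pmap f)); rewrite pmap_cat !pmap_take_index => take_m2.
have := take_uniq m2 uniq_s; rewrite -take_m2 cat_uniq => /and3P [_ disj _].
have := in_take m2 x_s; rewrite -take_m2 mem_cat (in_take m1 x_s).
case: ltnP => [lt_m1 | //] _; apply/negP => x_slice.
by case/hasP: disj; exists x; rewrite ?(in_take m1 x_s).
Qed.

End PmapIndex.

Definition out_boundary n (E : rel 'I_n) (A : {set 'I_n}) : {set 'I_n} :=
  [set u in A | [exists v in ~: A, E u v]].

Definition in_boundary n (E : rel 'I_n) (A : {set 'I_n}) : {set 'I_n} :=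
  [set u in ~: A | [exists v in A, E u v]].

Lemma setU_cons (T : finType) (A : {set T}) v (r : seq T) :
  A :|: [set u in v :: r] = (v |: A) :|: [set u in r].
Proof. by apply/setP => u; rewrite !inE orbCA orbA. Qed.

Section Execution.
Variables (n : nat) (E : rel 'I_n) (M : nat).
Implicit Types (F S D : {set 'I_n}) (t : seq (op n)).

Definition compute_of (o : op n) := if o is Compute v then Some v else None.
Definition read_of (o : op n) := if o is Read v then Some v else None.
Definition write_of (o : op n) := if o is Write v then Some v else None.

Definition computed t := pmap compute_of t.
Definition reads t := pmap read_of t.
Definition writes t := pmap write_of t.

Definition fast_step F (o : op n) :=
  match o with
  | Compute v | Read v => v |: F
  | Write _ => F
  | Evict v => F :\ v
  end.

Definition fast_after F t := foldl fast_step F t.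

Lemma io_cost_reads_writes t : io_cost t = size (reads t) + size (writes t).
Proof.
elim: t => [|o t IH] //; rewrite /io_cost /reads /writes.
by case: o => v /=; rewrite -/(io_cost t) IH ?addnS.
Qed.

Lemma exec_cat F S D t1 t2 :
  exec E M F S D (t1 ++ t2) ->
  exec E M (fast_after F t1) (S :|: [set u in writes t1])
    (D :|: [set u in computed t1]) t2.
Proof.
elim: t1 F S D => [|o t1 IH] F S D /=; first by rewrite !setU0.
case: o => v /=.
- by case/and4P => _ _ _ /IH; rewrite /computed /= setU_cons.
- by case/and3P => _ _ /IH.
- by case/andP => _ /IH; rewrite /writes /= setU_cons.
- exact: IH.
Qed.

Lemma exec_fast_card F S D t1 t2 :
  #|F| <= M -> exec E M F S D (t1 ++ t2) -> #|fast_after F t1| <= M.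
Proof.
elim: t1 F S D => [|o t1 IH] F S D //= F_M.
case: o => v /=.
- by case/and4P => _ _ /IH; apply.
- by case/and3P => _ /IH; apply.
- by case/andP => _ /IH; apply.
- by apply: IH; apply: leq_trans F_M; rewrite subset_leq_card ?subD1set.
Qed.

Lemma exec_computed F S D t :
  exec E M F S D t ->
  [/\ uniq (computed t), {in computed t, forall u, u \notin D}
    & forall u, (u \in D) || (u \in computed t)].
Proof.
elim: t F S D => [|o t IH] F S D /=.
  by move/eqP => ->; split => // u; rewrite inE.
case: o => v /= => [|/and3P [_ _ /IH //] | /andP [_ /IH //] | /IH //].
case/and4P => vD _ _ /IH [uniq_t new_t all_t].
rewrite /computed /= -/(computed t).
have vt : v \notin computed t by apply/negP => /new_t; rewrite setU11.
split; first by rewrite /= vt.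
  by move=> u /predU1P [-> // | /new_t]; rewrite !inE negb_or => /andP [].
by move=> u; rewrite inE orbCA orbA -in_setU1.
Qed.

Lemma exec_io_done F S D t1 t2 :
  F \subset D -> S \subset D -> exec E M F S D (t1 ++ t2) ->
  {subset reads t1 ++ writes t1 <= D :|: [set u in computed t1]}.
Proof.
elim: t1 F S D => [|o t1 IH] F S D FD SD //=.
rewrite /reads /writes /computed.
case: o => v /= => [/and4P [_ _ _ ex] | /and3P [vS _ ex] | /andP [vF ex] | ex].
- move=> u /(IH _ _ _ (setUS [set v] FD) (subset_trans SD (subsetU1 v D)) ex).
  by rewrite setU_cons.
- move=> u; rewrite inE => /predU1P [-> | ].
    by rewrite inE (subsetP SD).
  by apply: (IH _ _ _ _ SD ex); rewrite subUset sub1set (subsetP SD) // FD.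
- move=> u; rewrite mem_cat inE orbCA -mem_cat => /predU1P [-> | ].
    by rewrite inE (subsetP FD).
  by apply: (IH _ _ _ FD _ ex); rewrite subUset sub1set (subsetP FD) // SD.
- by apply: (IH _ _ _ _ SD ex); rewrite (subset_trans _ FD) ?subD1set.
Qed.

Lemma exec_must_read F S D t1 t2 u v :
  exec E M F S D (t1 ++ t2) -> u \notin computed t1 -> v \in computed t1 ->
  E u v -> (u \in F) || (u \in reads t1).
Proof.
elim: t1 F S D => [|o t1 IH] F S D //=.
rewrite /reads /computed.
case: o => w /= => [/and4P [_ /forallP preds _ ex] | /and3P [_ _ ex] | /andP [_ ex] | ex].
- rewrite !inE negb_or => /andP [uw ut] /predU1P [-> | vt] Euv.
    by rewrite (implyP (preds u)).
  by have := IH _ _ _ ex ut vt Euv; rewrite !inE (negbTE uw).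
- move=> ut vt Euv; case/orP: (IH _ _ _ ex ut vt Euv) => [/setU1P [-> | ->] | ut'] //.
    by rewrite inE eqxx orbT.
  by rewrite inE ut' !orbT.
- exact: IH ex.
- move=> ut vt Euv.
  by case/orP: (IH _ _ _ ex ut vt Euv) => [/setD1P [_ ->] | ->]; rewrite ?orbT.
Qed.

Lemma exec_pred_done F S D t1 t2 u v :
  F \subset D -> S \subset D -> exec E M F S D (t1 ++ t2) ->
  v \in computed t1 -> E u v -> u \in D :|: [set u in computed t1].
Proof.
move=> FD SD ex vt Euv; rewrite inE in_set orbC.
case: (boolP (u \in computed t1)) => //= ut.
case/orP: (exec_must_read ex ut vt Euv) => [/(subsetP FD) // | u_read].
have := exec_io_done FD SD ex; move/(_ u); rewrite mem_cat u_read inE in_set.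
by rewrite (negbTE ut) orbF; apply.
Qed.

Lemma exec_lost F S D t u v :
  exec E M F S D t -> u \in D -> u \notin F -> u \notin S ->
  v \in computed t -> ~~ E u v.
Proof.
elim: t F S D => [|o t IH] F S D //=.
rewrite /computed.
case: o => w /= => [/and4P [wD /forallP preds _ ex] | /and3P [wS _ ex] | /andP [wF ex] | ex] uD uF uS.
- have uw : u != w by apply: contraNneq wD => <-.
  rewrite inE => /predU1P [-> | vt].
    by apply: contraNN uF => Euw; rewrite (implyP (preds u)).
  by apply: IH ex _ _ uS vt; rewrite !inE ?uD ?orbT // negb_or uw.
- have uw : u != w by apply: contraNneq uS => ->.
  by apply: IH ex uD _ uS; rewrite !inE negb_or uw.
- have uw : u != w by apply: contraNneq uF => ->.
  by apply: IH ex uD uF _; rewrite !inE negb_or uw.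
- by apply: IH ex uD _ uS; rewrite !inE negb_and uF orbT.
Qed.

Lemma exec_must_write F S D t1 t2 u v :
  exec E M F S D (t1 ++ t2) -> u \notin S -> u \in computed t1 ->
  v \in computed t2 -> E u v -> (u \in fast_after F t1) || (u \in writes t1).
Proof.
move=> /exec_cat ex uS ut vt Euv; apply/negPn/negP; rewrite negb_or => /andP [uF uW].
have uD : u \in D :|: [set u in computed t1] by rewrite !inE ut orbT.
have uS' : u \notin S :|: [set u in writes t1] by rewrite !inE negb_or uS.
by have := exec_lost ex uD uF uS' vt; rewrite Euv.
Qed.

Lemma valid_eval_computed s :
  valid_eval E M s -> uniq (computed s) /\ forall u, u \in computed s.
Proof.
by case/exec_computed => uniq_s _ all_s; split=> // u; have := all_s u; rewrite inE.
Qed.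

Lemma in_boundary_segment t0 seg t2 :
  valid_eval E M (t0 ++ seg ++ t2) ->
  in_boundary E [set u in computed seg]
    \subset fast_after set0 t0 :|: [set u in reads seg].
Proof.
move=> /exec_cat; rewrite !set0U => ex0.
apply/subsetP => u; rewrite !inE => /andP [useg /existsP [v /andP [vseg Euv]]].
by rewrite inE in vseg; apply: exec_must_read ex0 useg vseg Euv.
Qed.

Lemma out_boundary_segment t0 seg t2 :
  valid_eval E M (t0 ++ seg ++ t2) ->
  out_boundary E [set u in computed seg]
    \subset fast_after (fast_after set0 t0) seg :|: [set u in writes seg].
Proof.
move=> ex; have ex0 := exec_cat ex; rewrite !set0U in ex0.
have [uniq_s all_s] := valid_eval_computed ex.
rewrite /computed !pmap_cat cat_uniq has_cat negb_or in uniq_s.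
have not_earlier u : u \in computed t0 -> u \notin computed seg.
  by case/and3P: uniq_s => _ /andP [/hasPn disj _] _ u0; apply: contraTN u0 => /disj.
apply/subsetP => u; rewrite !inE => /andP [useg /existsP [v /andP [vseg Euv]]].
rewrite !inE in vseg; apply: (exec_must_write ex0 _ useg _ Euv).
  rewrite inE; apply: contraL useg => u_written; apply: not_earlier.
  have := exec_io_done (sub0set _) (sub0set _) ex; move/(_ u).
  by rewrite mem_cat u_written orbT set0U inE; apply.
have := all_s v; rewrite /computed !pmap_cat !mem_cat (negbTE vseg) /=.
case/orP => // v0; have := exec_pred_done (sub0set _) (sub0set _) ex v0 Euv.
by rewrite set0U inE => /not_earlier; rewrite useg.
Qed.

Lemma io_segment_boundary t0 seg t2 :
  valid_eval E M (t0 ++ seg ++ t2) ->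
  #|out_boundary E [set u in computed seg]| + #|in_boundary E [set u in computed seg]|
    <= io_cost seg + 2 * M.
Proof.
move=> ex; have F0_M : #|fast_after set0 t0| <= M.
  by apply: exec_fast_card ex; rewrite cards0.
have F1_M : #|fast_after (fast_after set0 t0) seg| <= M.
  by apply: exec_fast_card F0_M (exec_cat ex).
have card_setU_seq (B : {set 'I_n}) (r : seq 'I_n) : #|B :|: [set u in r]| <= #|B| + size r.
  by apply: leq_trans (leq_card_setU _ _).1 _; rewrite leq_add2l cardsE card_size.
have out_le := leq_trans (subset_leq_card (out_boundary_segment ex)) (card_setU_seq _ _).
have in_le := leq_trans (subset_leq_card (in_boundary_segment ex)) (card_setU_seq _ _).
rewrite io_cost_reads_writes; lia.
Qed.

Lemma valid_eval_schedule s :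
  acyclic E -> valid_eval E M s ->
  exists2 σ : 'S_n, topological E σ & forall u, σ u = index u (computed s) :> nat.
Proof.
move=> acyc ex; have [uniq_s s_all] := valid_eval_computed ex.
have size_s : size (computed s) = n.
  have perm_s : perm_eq (computed s) (enum 'I_n).
    by apply: uniq_perm; rewrite ?enum_uniq // => u; rewrite mem_enum s_all.
  by rewrite (perm_size perm_s) size_enum_ord.
have lt_index u : index u (computed s) < n.
  by rewrite -[X in _ < X]size_s index_mem.
have index_inj : injective (fun u => Ordinal (lt_index u)).
  by move=> u v /(congr1 val) /= eq_uv; rewrite -(nth_index u (s_all u)) eq_uv nth_index.
exists (perm index_inj) => [u v Euv | u]; rewrite ?permE //.
set p := pmap_index compute_of (index v (computed s)).+1 s.
have ex' : exec E M set0 set0 set0 (take p s ++ drop p s) by rewrite cat_take_drop.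
have vt : v \in computed (take p s) by rewrite /computed pmap_take_index in_take.
have := exec_pred_done (sub0set _) (sub0set _) ex' vt Euv.
rewrite set0U inE /computed pmap_take_index in_take // ltnS leq_eqVlt.
case/orP => // /eqP eq_index.
have uv : u = v by rewrite -(nth_index u (s_all u)) eq_index nth_index.
by move: (acyc u v Euv); rewrite uv connect0.
Qed.

End Execution.

Section Laplacian.
Variables (R : realFieldType) (n : nat) (E : rel 'I_n).
Local Open Scope ring_scope.

Lemma sum_out_edges u : \sum_v ((E u v)%:R : R) = (dout E u)%:R.
Proof.
rewrite -natr_sum /dout -sum1_card [in RHS]big_mkcond /=.
by congr (_%:R); apply: eq_bigr => v _; rewrite inE; case: (E u v).
Qed.

Lemma sum_out_frac_le (B : {set 'I_n}) u :
  \sum_(v in B) ((E u v)%:R / (dout E u)%:R : R) <= [exists v in B, E u v]%:R.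
Proof.
have [/existsP [w /andP [_ Euw]] | no_edge] := boolP [exists v in B, E u v]; last first.
  rewrite big1 // => v vB; move: no_edge; rewrite negb_exists => /forallP /(_ v).
  by rewrite vB /= => /negbTE ->; rewrite mul0r.
have dout_gt0 : (0 < dout E u)%N by rewrite card_gt0; apply/set0Pn; exists w; rewrite inE.
apply: le_trans (_ : \sum_v ((E u v)%:R / (dout E u)%:R) <= 1).
  rewrite [leRHS](bigID [in B]) /= lerDl; apply: sumr_ge0 => v _.
  by rewrite divr_ge0 ?ler0n.
by rewrite -mulr_suml sum_out_edges divff // pnatr_eq0 -lt0n.
Qed.

Lemma card_set_cond (A : {set 'I_n}) (P : pred 'I_n) :
  (#|[set u in A | P u]|%:R : R) = \sum_(u in A) (P u)%:R.
Proof.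
rewrite [RHS](eq_bigr (fun u => if P u then 1 else 0)) => [|u _]; last by case: (P u).
by rewrite -big_mkcondr -sum1_card natr_sum; apply: eq_bigl => u; rewrite inE.
Qed.

Lemma Ltilde_quad_indicator (A : {set 'I_n}) :
  \sum_u \sum_v (u \in A)%:R * Ltilde R E u v * (v \in A)%:R
    = \sum_(u in A) \sum_(v in ~: A) wadj R E u v.
Proof.
rewrite [RHS]big_mkcond; apply: eq_bigr => u _.
have [uA | uA] := boolP (u \in A); last by rewrite big1 // => v _; rewrite /= !mul0r.
transitivity (\sum_(v in A) Ltilde R E u v).
  by rewrite [RHS]big_mkcond; apply: eq_bigr => v _; case: (v \in A); rewrite mul1r ?mulr1 ?mulr0.
under eq_bigr => v _ do rewrite !mxE.
rewrite sumrB (bigD1 u) //= eqxx mulr1n [X in _ + X - _]big1 ?addr0; last first.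
  by move=> v /andP [_]; rewrite eq_sym => /negbTE ->; rewrite mulr0n.
rewrite [\sum_j _](bigID [in A]) /= addrAC subrr add0r.
by apply: eq_bigl => v; rewrite inE.
Qed.

Lemma cut_le_boundary (A : {set 'I_n}) :
  \sum_(u in A) \sum_(v in ~: A) wadj R E u v
    <= (#|out_boundary E A| + #|in_boundary E A|)%N%:R.
Proof.
under eq_bigr => u _ do rewrite big_split /=.
rewrite big_split /= natrD !card_set_cond; apply: lerD.
  by apply: ler_sum => u _; apply: sum_out_frac_le.
by rewrite exchange_big /=; apply: ler_sum => v _; apply: sum_out_frac_le.
Qed.

End Laplacian.

Section Trace.
Variable R : comPzRingType.
Local Open Scope ring_scope.

Lemma mxtrace_quad m k (L : 'M[R]_m) (G : 'M[R]_(m, k)) :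
  \tr (G^T *m L *m G) = \sum_j \sum_u \sum_v G u j * L u v * G v j.
Proof.
apply: eq_bigr => j _; rewrite !mxE exchange_big /=; apply: eq_bigr => v _.
by rewrite !mxE mulr_suml; apply: eq_bigr => u _; rewrite !mxE.
Qed.

Lemma mxtrace_conj_gram m p k (L : 'M[R]_m) (P : 'M[R]_(m, p)) (H : 'M[R]_(p, k)) :
  \tr (P^T *m L *m P *m (H *m H^T)) = \tr ((P *m H)^T *m L *m (P *m H)).
Proof. by rewrite mulmxA mxtrace_mulC trmx_mul !mulmxA. Qed.

End Trace.

Lemma order_mx_perm (R : nzRingType) n (σ : 'S_n) : order_mx R σ = perm_mx σ.
Proof. by apply/matrixP => i j; rewrite !mxE. Qed.

Local Open Scope ring_scope.

Lemma Ltilde_quad_slice (R : realFieldType) n (E : rel 'I_n) M s i j :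
  valid_eval E M s -> (i <= j)%N ->
  \sum_u \sum_v (u \in computed (slice i j s))%:R * Ltilde R E u v
                 * (v \in computed (slice i j s))%:R
    <= (io_cost (slice i j s) + 2 * M)%N%:R.
Proof.
move=> valid_s le_ij; set A := [set u in computed (slice i j s)].
have indicatorE u : (u \in computed (slice i j s))%:R = (u \in A)%:R :> R by rewrite inE.
under eq_bigr => u _ do under eq_bigr => v _ do rewrite !indicatorE.
rewrite Ltilde_quad_indicator; apply: le_trans (cut_le_boundary _ _ _) _; rewrite ler_nat.
by apply: (io_segment_boundary (t0 := take i s) (t2 := drop j s)); rewrite cat_take_slice_drop.
Qed.

Theorem theorem4p3 (R : realFieldType) (n : nat) (E : rel 'I_n) (M : nat) :
  acyclic E ->
  forall s : seq (op n), valid_eval E M s ->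
  exists X : 'M[R]_n, in_OG E X /\
    forall k : nat, (1 <= k <= n)%N ->
      \tr (X^T *m Ltilde R E *m X *m Wk R n k) - (2 * k * M)%:R
        <= (io_cost s)%:R.
Proof.
move=> acyc s valid_s.
have [σ σ_topo σE] := valid_eval_schedule acyc valid_s.
exists (order_mx R σ); split; first by exists σ.
move=> k _; rewrite lerBlDr /Wk order_mx_perm mxtrace_conj_gram -row_permE mxtrace_quad.
set g := blk_start n k.
have gS j : g j.+1 = (g j + blk_size n k j)%N by rewrite /g /blk_start big_ord_recr.
pose p j := pmap_index (@compute_of n) (g j) s.
have p_mono j : (p j <= p j.+1)%N by apply: pmap_index_mono; rewrite gS leq_addr.
have blockE (j : 'I_k) u :
    row_perm σ (What R n k) u j = (u \in computed (slice (p j) (p j.+1) s))%:R.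
  have [uniq_s s_all] := valid_eval_computed valid_s.
  by rewrite !mxE /computed mem_pmap_slice_index -?σE ?gS ?leq_addr.
under eq_bigr => j _ do under eq_bigr => u _ do under eq_bigr => v _ do rewrite !blockE.
apply: le_trans; first by apply: ler_sum => j _; apply: Ltilde_quad_slice valid_s (p_mono j).
rewrite -natr_sum -natrD ler_nat big_split sum_nat_const card_ord /=.
by rewrite leq_add ?(sum_count_slices _ _ _ p_mono) // mulnCA mulnA.
Qed.
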